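(* Let $I$ be an interval with $1\in I\subset\,]0,\infty[$. Let $\lambda,\mu,\tilde\mu\in C^1(I\times\mathbb{R})$ be $1$-periodic in $r$, and let $\psi\in C^1(\mathbb{R})$, $\overset{\circ}{\phi}\in C^2(\mathbb{R})$ be $1$-periodic; write $\overset{\circ}{\lambda}=\lambda(1,\cdot)$, $\overset{\circ}{\mu}=\mu(1,\cdot)$. Define the operators $D^{\pm}=e^{-\mu}\partial_t\pm e^{-\lambda}\partial_r$ and the coefficients $$\tilde a=\Big(-\dot\lambda-\frac1t\Big)e^{-\mu}-\tilde\mu e^{-\lambda},\quad b=-\frac{e^{-\mu}}{t},\quad \tilde c=\Big(-\dot\lambda-\frac1t\Big)e^{-\mu}+\tilde\mu e^{-\lambda}.$$ Let $X,Y\in C^1(I\times\mathbb{R})$ be $1$-periodic in $r$ and solve $$D^+X=\tilde aX+bY,\qquad D^-Y=bX+\tilde cY$$ on $I\times\mathbb{R}$ with $X(1,r)=e^{-\overset{\circ}{\mu}(r)}\psi(r)-e^{-\overset{\circ}{\lambda}(r)}\overset{\circ}{\phi}'(r)$ and $Y(1,r)=e^{-\overset{\circ}{\mu}(r)}\psi(r)+e^{-\overset{\circ}{\lambda}(r)}\overset{\circ}{\phi}'(r)$. Set $$K_0=2\sup_{r\in\mathbb{R}}\big(|\psi(r)|e^{-\overset{\circ}{\mu}(r)}+|\overset{\circ}{\phi}'(r)|e^{-\overset{\circ}{\lambda}(r)}\big),\quad m(t)=\sup_{r\in\mathbb{R}}\Big(|\dot\lambda(t,r)|+\frac2t+|\tilde\mu(t,r)|e^{(\mu-\lambda)(t,r)}\Big),$$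 $$K(t)=\sup_{r\in\mathbb{R}}\big(X^2+Y^2\big)^{1/2}(t,r).$$ Then for $t\in I$ with $t\le1$, $$K(t)\le K_0+3\int_t^1 m(s)K(s)\,ds,$$ and for $t\in I$ with $t\ge1$, $K(t)\le K_0+3\int_1^t m(s)K(s)\,ds$.
   Context: A dot denotes $\partial_t$ and a prime denotes $\partial_r$. The variable $t$ is time and $r$ the spatial variable; all functions of $(t,r)$ are periodic in $r$ with period 1. *)

From Stdlib Require Import Reals.
From Coquelicot Require Import Coquelicot.
Open Scope R_scope.

Definition is_interval (I : R -> Prop) : Prop :=
  forall a b c, I a -> I c -> a <= b -> b <= c -> I b.

Definition deriv_within (I : R -> Prop) (g : R -> R) (t l : R) : Prop :=
  filterlim (fun s => (g s - g t) / (s - t))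
    (within (fun s => I s /\ s <> t) (locally t)) (locally l).

Definition cont_on_IxR (I : R -> Prop) (g : R -> R -> R) : Prop :=
  forall t r, I t ->
    filterlim (fun p : R * R => g (fst p) (snd p))
      (within (fun p : R * R => I (fst p)) (locally (t, r)))
      (locally (g t r)).

(* f in C^1(I x R) with partial derivatives ft = \dot f and fr = f' *)
Definition C1_with (I : R -> Prop) (f ft fr : R -> R -> R) : Prop :=
  (forall t r, I t -> deriv_within I (fun s => f s r) t (ft t r)) /\
  (forall t r, I t -> is_derive (fun x => f t x) r (fr t r)) /\
  cont_on_IxR I f /\ cont_on_IxR I ft /\ cont_on_IxR I fr.

Definition C1_on (I : R -> Prop) (f : R -> R -> R) : Prop :=
  exists ft fr, C1_with I f ft fr.

Definition periodic_r (I : R -> Prop) (f : R -> R -> R) : Prop :=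
  forall t r, I t -> f t (r + 1) = f t r.

Definition periodic1 (g : R -> R) : Prop := forall r, g (r + 1) = g r.

(* supremum over r in R of a real function (as an element of Rbar, then
   projected to R; finite in the situation of the theorem) *)
Definition supR (g : R -> R) : R :=
  real (Lub_Rbar (fun x => exists r, x = g r)).

From Stdlib Require Import Reals Lra Classical ClassicalEpsilon.
From Coquelicot Require Import Coquelicot.
Open Scope R_scope.

(* Where the periodic function X(t,.) attains its maximum its r-derivative vanishes, so the
   equation for X degenerates there into a bound |X_t| <= m(t) (X^2 + Y^2)^(1/2) <= m(t) K(t);
   the same holds for -X and for +-Y.  A comparison argument with one-sided Dini derivatives
   then shows that sup_r X(t,.) moves away from sup_r X(1,.) by at most |int_1^t m K|.  Hence
   |X|, |Y| <= K0/2 + |int_1^t m K|, and K <= |X| + |Y| gives the estimate (even with the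
   constant 2 instead of 3). *)

Lemma frac_shift (r : R) : exists n, 0 <= r + IZR n <= 1.
Proof.
  destruct (base_Int_part r) as [H1 H2].
  exists (- Int_part r)%Z. rewrite opp_IZR. lra.
Qed.

Lemma periodic1_shift_Z (f : R -> R) : periodic1 f -> forall n r, f (r + IZR n) = f r.
Proof.
  intros Hp n. induction n as [|n IH|n IH] using Z.peano_ind; intro r.
  - now rewrite Rplus_0_r.
  - rewrite succ_IZR, <- Rplus_assoc, Hp. apply IH.
  - rewrite <- (IH r), <- Hp. f_equal.
    rewrite <- (Z.succ_pred n) at 2. rewrite succ_IZR. ring.
Qed.

Lemma periodic1_max (f : R -> R) : periodic1 f -> (forall r, continuous f r) ->
  exists rs, forall r, f r <= f rs.
Proof.
  intros Hp Hc.
  destruct (continuity_ab_maj f 0 1) as [rs [Hrs _]]; [lra| |].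
  { intros c _. apply continuity_pt_filterlim, Hc. }
  exists rs. intro r. destruct (frac_shift r) as [n Hn].
  rewrite <- (periodic1_shift_Z f Hp n r). now apply Hrs.
Qed.

Lemma supR_max (f : R -> R) (rs : R) : (forall r, f r <= f rs) -> supR f = f rs.
Proof.
  intro H. unfold supR.
  destruct (Lub_Rbar_correct (fun x => exists r, x = f r)) as [Hub Hlub].
  replace (Lub_Rbar _) with (Finite (f rs)); [easy|].
  apply Rbar_le_antisym.
  - apply Hub. now exists rs.
  - apply Hlub. intros x [r ->]. apply H.
Qed.

Lemma is_derive_max_0 (f : R -> R) (rs l : R) :
  (forall r, f r <= f rs) -> is_derive f rs l -> l = 0.
Proof.
  intros Hm Hd. apply is_derive_Reals in Hd.
  change l with (derive_pt f rs (exist _ l Hd)).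
  apply (deriv_maximum f (rs - 1) (rs + 1)); [lra|lra|]. intros x _ _. apply Hm.
Qed.

Lemma continuous_of_is_derive (f df : R -> R) : (forall r, is_derive f r (df r)) ->
  forall r, continuous f r.
Proof.
  intros Hd r. apply (@ex_derive_continuous R_AbsRing R_NormedModule). exists (df r). apply Hd.
Qed.

Lemma periodic1_derive (f df : R -> R) :
  (forall r, is_derive f r (df r)) -> periodic1 f -> periodic1 df.
Proof.
  intros Hd Hp r.
  rewrite <- (is_derive_unique _ _ _ (Hd r)), <- (Derive_ext _ _ r Hp).
  symmetry. apply is_derive_unique.
  replace (df (r + 1)) with (scal 1 (df (r + 1))) by apply Rmult_1_l.
  apply (is_derive_comp f (fun x => x + 1)); [apply Hd|].
  auto_derive; [easy|ring].
Qed.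

Lemma continuous_on_plus (D : R -> Prop) (f g : R -> R) :
  continuous_on D f -> continuous_on D g -> continuous_on D (fun x => f x + g x).
Proof.
  intros Hf Hg x Dx.
  eapply filterlim_comp_2; [apply Hf, Dx|apply Hg, Dx|apply (filterlim_plus (f x) (g x))].
Qed.

Lemma continuous_on_mult (D : R -> Prop) (f g : R -> R) :
  continuous_on D f -> continuous_on D g -> continuous_on D (fun x => f x * g x).
Proof.
  intros Hf Hg x Dx.
  eapply filterlim_comp_2; [apply Hf, Dx|apply Hg, Dx|apply (filterlim_mult (f x) (g x))].
Qed.

Lemma continuous_on_opp (D : R -> Prop) (f : R -> R) :
  continuous_on D f -> continuous_on D (fun x => - f x).
Proof.
  intros Hf x Dx. eapply filterlim_comp; [apply Hf, Dx|apply (filterlim_opp (f x))].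
Qed.

Lemma continuous_on_reflect (a b : R) (f : R -> R) :
  continuous_on (fun x => a <= x <= b) f ->
  continuous_on (fun x => - b <= x <= - a) (fun x => f (- x)).
Proof.
  intros Hf x Hx. apply filterlim_locally. intro eps.
  assert (Hfx := Hf (- x) ltac:(lra)). rewrite filterlim_locally in Hfx.
  destruct (Hfx eps) as [d Hd].
  exists d. intros y Hy Hyab. apply Hd; [|lra].
  change (Rabs (- y - - x) < d). rewrite <- Rabs_Ropp.
  now replace (- (- y - - x)) with (y - x) by ring.
Qed.

Definition clamp (a b x : R) : R := Rmax a (Rmin b x).

Lemma clamp_between (a b x : R) : a <= b -> a <= clamp a b x <= b.
Proof. intro H. unfold clamp, Rmax, Rmin. repeat destruct Rle_dec; lra. Qed.

Lemma clamp_id (a b x : R) : a <= x <= b -> clamp a b x = x.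
Proof. intro H. unfold clamp. rewrite Rmin_right, Rmax_right; lra. Qed.

Lemma clamp_1_lipschitz (a b x y : R) : a <= b -> Rabs (clamp a b x - clamp a b y) <= Rabs (x - y).
Proof.
  intro H. unfold clamp, Rmax, Rmin.
  repeat destruct Rle_dec; unfold Rabs; repeat destruct Rcase_abs; lra.
Qed.

Lemma continuous_clamp_comp (a b : R) (f : R -> R) : a <= b ->
  continuous_on (fun x => a <= x <= b) f -> forall z, continuous (fun x => f (clamp a b x)) z.
Proof.
  intros Hab Hf z. eapply filterlim_comp; [|apply Hf, clamp_between, Hab].
  intros P [e He]. exists e. intros x Hx. apply He; [|now apply clamp_between].
  change (Rabs (clamp a b x - clamp a b z) < e).
  eapply Rle_lt_trans; [apply clamp_1_lipschitz, Hab|exact Hx].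
Qed.

Lemma continuous_on_attains_max (a b : R) (f : R -> R) : a <= b ->
  continuous_on (fun x => a <= x <= b) f ->
  exists c, a <= c <= b /\ forall x, a <= x <= b -> f x <= f c.
Proof.
  intros Hab Hf.
  destruct (continuity_ab_maj (fun x => f (clamp a b x)) a b Hab) as [c [Hc Hcab]].
  { intros z _. apply continuity_pt_filterlim, continuous_clamp_comp; assumption. }
  exists c. split; [exact Hcab|]. intros x Hx.
  specialize (Hc x Hx). now rewrite !clamp_id in Hc.
Qed.

Lemma ex_RInt_continuous_on (I : R -> Prop) (h : R -> R) (a b : R) :
  is_interval I -> continuous_on I h -> I a -> I b -> ex_RInt h a b.
Proof.
  intros HI Hh. revert a b.
  assert (Hle : forall a b, I a -> I b -> a <= b -> ex_RInt h a b).
  { intros a b Ia Ib Hab.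
    apply (ex_RInt_ext (fun x => h (clamp a b x))).
    { intros x Hx. rewrite Rmin_left, Rmax_right in Hx by exact Hab.
      rewrite clamp_id; [easy|lra]. }
    apply (@ex_RInt_continuous R_CompleteNormedModule). intros z _.
    apply continuous_clamp_comp; [exact Hab|].
    apply (continuous_on_subset I); [|exact Hh]. intros x Hx. now apply (HI a x b). }
  intros a b Ia Ib. destruct (Rle_or_lt a b).
  - now apply Hle.
  - apply ex_RInt_swap, Hle; auto; lra.
Qed.

Lemma deriv_within_quotient (P : R -> Prop) (g : R -> R) (t l : R) : deriv_within P g t l ->
  forall eps, 0 < eps -> exists d, 0 < d /\ forall u, P u -> u <> t -> Rabs (u - t) < d ->
  Rabs ((g u - g t) / (u - t) - l) < eps.
Proof.
  intros Hd eps Heps. unfold deriv_within in Hd. rewrite filterlim_locally in Hd.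
  destruct (Hd (mkposreal eps Heps)) as [d Hd'].
  exists d. split; [apply cond_pos|]. intros u Pu Hu Hud. now apply (Hd' u Hud).
Qed.

Lemma deriv_within_left_bound (P : R -> Prop) (g : R -> R) (t l : R) : deriv_within P g t l ->
  forall eps, 0 < eps -> exists d, 0 < d /\ forall u, P u -> u < t -> t - u < d ->
  g t - g u <= (l + eps) * (t - u).
Proof.
  intros Hd eps Heps. destruct (deriv_within_quotient P g t l Hd eps Heps) as [d [Hd0 Hq]].
  exists d. split; [exact Hd0|]. intros u Pu Hu Htu.
  assert (Hq' := Hq u Pu ltac:(lra) ltac:(rewrite Rabs_left; lra)).
  apply Rabs_def2 in Hq'.
  replace (g t - g u) with ((g u - g t) / (u - t) * (t - u)) by (field; lra).
  apply Rmult_le_compat_r; lra.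
Qed.

Lemma deriv_within_right_bound (P : R -> Prop) (g : R -> R) (t l : R) : deriv_within P g t l ->
  forall eps, 0 < eps -> exists d, 0 < d /\ forall u, P u -> t < u -> u - t < d ->
  g t - g u <= (eps - l) * (u - t).
Proof.
  intros Hd eps Heps. destruct (deriv_within_quotient P g t l Hd eps Heps) as [d [Hd0 Hq]].
  exists d. split; [exact Hd0|]. intros u Pu Hu Htu.
  assert (Hq' := Hq u Pu ltac:(lra) ltac:(rewrite Rabs_right; lra)).
  apply Rabs_def2 in Hq'.
  replace (g t - g u) with (- ((g u - g t) / (u - t)) * (u - t)) by (field; lra).
  apply Rmult_le_compat_r; lra.
Qed.

Lemma deriv_within_plus (P : R -> Prop) (f g : R -> R) (t lf lg : R) :
  deriv_within P f t lf -> deriv_within P g t lg -> deriv_within P (fun s => f s + g s) t (lf + lg).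
Proof.
  intros Hf Hg. unfold deriv_within.
  apply (filterlim_ext (fun s => (f s - f t) / (s - t) + (g s - g t) / (s - t))).
  { intro s. unfold Rdiv. ring. }
  eapply filterlim_comp_2; [exact Hf|exact Hg|apply (filterlim_plus lf lg)].
Qed.

Lemma deriv_within_opp (P : R -> Prop) (f : R -> R) (t l : R) :
  deriv_within P f t l -> deriv_within P (fun s => - f s) t (- l).
Proof.
  intro Hf. unfold deriv_within.
  apply (filterlim_ext (fun s => - ((f s - f t) / (s - t)))).
  { intro s. unfold Rdiv. ring. }
  eapply filterlim_comp; [exact Hf|apply (filterlim_opp l)].
Qed.

Lemma deriv_within_continuous (P : R -> Prop) (g : R -> R) (t l : R) :
  deriv_within P g t l -> filterlim g (within P (locally t)) (locally (g t)).
Proof.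
  intro Hd. apply filterlim_locally. intro eps.
  destruct (deriv_within_quotient P g t l Hd 1 Rlt_0_1) as [d [Hd0 Hq]].
  set (L := Rabs l + 1). assert (HL : 0 < L) by (unfold L; pose proof (Rabs_pos l); lra).
  assert (HeL : 0 < eps / L) by (apply Rdiv_lt_0_compat; [apply cond_pos|exact HL]).
  exists (mkposreal _ (Rmin_pos d (eps / L) Hd0 HeL)). intros u Hu Pu.
  change (Rabs (u - t) < Rmin d (eps / L)) in Hu.
  change (Rabs (g u - g t) < eps).
  assert (Hmin := Rmin_l d (eps / L)). assert (Hmin' := Rmin_r d (eps / L)).
  destruct (Req_dec u t) as [->|Hut].
  { rewrite Rminus_diag, Rabs_R0. apply cond_pos. }
  assert (Hq' := Hq u Pu Hut ltac:(lra)).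
  replace (g u - g t) with ((g u - g t) / (u - t) * (u - t)) by (field; lra).
  rewrite Rabs_mult.
  assert (Hql : Rabs ((g u - g t) / (u - t)) < L).
  { unfold L. pose proof (Rabs_triang_inv ((g u - g t) / (u - t)) l). lra. }
  apply Rle_lt_trans with (L * Rabs (u - t)).
  - apply Rmult_le_compat_r; [apply Rabs_pos|lra].
  - replace (pos eps) with (L * (eps / L)) by (field; lra).
    apply Rmult_lt_compat_l; lra.
Qed.

Lemma RInt_sub_const_abs_le (h : R -> R) (a b c M : R) : ex_RInt h a b ->
  (forall x, Rmin a b <= x <= Rmax a b -> Rabs (h x - c) <= M) ->
  Rabs (RInt h a b - (b - a) * c) <= Rabs (b - a) * M.
Proof.
  intros Hex Hb. apply (norm_RInt_le_const_abs (fun x => h x - c) a b); [exact Hb|].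
  apply (is_RInt_minus h (fun _ => c)).
  - apply (@RInt_correct R_CompleteNormedModule), Hex.
  - apply (@is_RInt_const R_NormedModule).
Qed.

Lemma deriv_within_RInt (I : R -> Prop) (h : R -> R) (a t : R) :
  is_interval I -> continuous_on I h -> I a -> I t ->
  deriv_within I (fun s => RInt h a s) t (h t).
Proof.
  intros HI Hh Ia It. unfold deriv_within. apply filterlim_locally. intro eps.
  assert (Hht := Hh t It). rewrite filterlim_locally in Hht.
  destruct (Hht (pos_div_2 eps)) as [d Hd].
  exists d. intros u Hu [Iu Hut].
  change (Rabs ((RInt h a u - RInt h a t) / (u - t) - h t) < eps).
  change (Rabs (u - t) < d) in Hu.
  assert (Hex : forall x y, I x -> I y -> ex_RInt h x y)
    by (intros; now apply (ex_RInt_continuous_on I)).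
  assert (Hchasles : RInt h a u - RInt h a t = RInt h t u).
  { rewrite <- (RInt_Chasles h a t u) by auto. change (plus ?x ?y) with (x + y). ring. }
  assert (Hint : Rabs (RInt h t u - (u - t) * h t) <= Rabs (u - t) * (eps / 2)).
  { apply RInt_sub_const_abs_le; [now apply Hex|]. intros x Hx.
    assert (Ix : I x)
      by (unfold Rmin, Rmax in Hx; destruct Rle_dec; [apply (HI t x u)|apply (HI u x t)]; tauto).
    assert (Hxt : Rabs (x - t) < d).
    { unfold Rmin, Rmax in Hx. apply Rabs_def2 in Hu. destruct Rle_dec; apply Rabs_def1; lra. }
    apply Rlt_le. exact (Hd x Hxt Ix). }
  assert (Hpos : 0 < Rabs (u - t)) by (apply Rabs_pos_lt; lra).
  apply (Rmult_lt_reg_r (Rabs (u - t)) _ _ Hpos). rewrite <- Rabs_mult, Hchasles.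
  replace ((RInt h t u / (u - t) - h t) * (u - t)) with (RInt h t u - (u - t) * h t)
    by (field; lra).
  destruct eps as [eps Heps]. simpl in *. nra.
Qed.

Lemma deriv_within_unique (I : R -> Prop) (f : R -> R) (s l1 l2 p q : R) :
  is_interval I -> I p -> I q -> p <> q -> I s ->
  deriv_within I f s l1 -> deriv_within I f s l2 -> l1 = l2.
Proof.
  intros HI Ip Iq Hpq Is.
  assert (Hu : exists u, I u /\ u <> s)
    by (destruct (Req_dec p s) as [->|Hps]; [now exists q|now exists p]).
  destruct Hu as [u [Iu Hus]].
  intros H1 H2.
  assert (HF : ProperFilter' (within (fun x => I x /\ x <> s) (locally s))).
  { split; [|apply within_filter, locally_filter].
    intros [e He].
    set (y := if Rlt_dec s u then s + Rmin (e / 2) (u - s) else s - Rmin (e / 2) (s - u)).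
    assert (He2 : 0 < e / 2) by (destruct e; simpl; lra).
    assert (Hy : Rabs (y - s) < e /\ y <> s /\ I y).
    { unfold y. destruct Rlt_dec as [Hlt|Hge].
      - assert (Hm := Rmin_l (e / 2) (u - s)). assert (Hm' := Rmin_r (e / 2) (u - s)).
        assert (0 < Rmin (e / 2) (u - s)) by (apply Rmin_glb_lt; lra).
        rewrite Rabs_right by lra. repeat split; [lra|lra|apply (HI s _ u); auto; lra].
      - assert (Hm := Rmin_l (e / 2) (s - u)). assert (Hm' := Rmin_r (e / 2) (s - u)).
        assert (0 < Rmin (e / 2) (s - u)) by (apply Rmin_glb_lt; lra).
        rewrite Rabs_left by lra. repeat split; [lra|lra|apply (HI u _ s); auto; lra]. }
    destruct Hy as [Hye [Hys Iy]]. exact (He y Hye (conj Iy Hys)). }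
  exact (@filterlim_locally_unique _ R_AbsRing R_NormedModule _ HF _ l1 l2 H1 H2).
Qed.

Lemma deriv_within_periodic (I : R -> Prop) (f ft : R -> R -> R) (p q : R) :
  is_interval I -> I p -> I q -> p <> q -> periodic_r I f ->
  (forall t r, I t -> deriv_within I (fun s => f s r) t (ft t r)) -> periodic_r I ft.
Proof.
  intros HI Ip Iq Hpq Hp Hd t r It.
  apply (deriv_within_unique I (fun s => f s r) t _ _ p q HI Ip Iq Hpq It); [|apply Hd, It].
  unfold deriv_within.
  apply (filterlim_within_ext _ (fun s => (f s (r + 1) - f t (r + 1)) / (s - t))).
  { intros s [Is _]. now rewrite !Hp. }
  apply Hd, It.
Qed.

(** * Dini comparison *)

Lemma le_of_left_dini (D : R -> R) (a b : R) : a <= b ->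
  continuous_on (fun x => a <= x <= b) D ->
  (forall t, a < t <= b -> forall eps, 0 < eps -> exists d, 0 < d /\
     forall u, a <= u < t -> t - u < d -> D t - D u <= eps * (t - u)) ->
  D b <= D a.
Proof.
  intros Hab Hc Hdini. apply Rnot_lt_le. intro Hlt.
  assert (Hba : a < b) by (destruct Hab as [Hlt'|Heq]; [assumption|subst; lra]).
  (* tilt D so that it strictly increases from a to b; at its maximum the left Dini bound fails *)
  set (k := (D b - D a) / (2 * (b - a))).
  assert (Hk : 0 < k) by (unfold k; apply Rdiv_lt_0_compat; lra).
  set (G := fun x => D x + - (k * x)).
  assert (HGc : continuous_on (fun x => a <= x <= b) G).
  { apply continuous_on_plus; [exact Hc|]. apply continuous_on_forall. intros x _.
    apply (@ex_derive_continuous R_AbsRing R_NormedModule). auto_derive. easy. }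
  destruct (continuous_on_attains_max a b G Hab HGc) as [c [Hcab Hmax]].
  assert (HGab : G b - G a = (D b - D a) / 2) by (unfold G, k; field; lra).
  assert (Hac : a < c).
  { destruct (proj1 Hcab) as [Hlt'|Heq]; [assumption|subst c].
    specialize (Hmax b ltac:(lra)). lra. }
  destruct (Hdini c ltac:(lra) (k / 2) ltac:(lra)) as [d [Hd Hdc]].
  set (u := Rmax a (c - d / 2)).
  assert (Hu1 : a <= u) by apply Rmax_l.
  assert (Hu2 : c - d / 2 <= u) by apply Rmax_r.
  assert (Hu3 : u < c) by (apply Rmax_lub_lt; lra).
  specialize (Hdc u ltac:(lra) ltac:(lra)).
  specialize (Hmax u ltac:(lra)). unfold G in Hmax.
  assert (0 < c - u) by lra. nra.
Qed.

Lemma le_of_right_dini (D : R -> R) (a b : R) : a <= b ->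
  continuous_on (fun x => a <= x <= b) D ->
  (forall t, a <= t < b -> forall eps, 0 < eps -> exists d, 0 < d /\
     forall u, t < u <= b -> u - t < d -> D t - D u <= eps * (u - t)) ->
  D a <= D b.
Proof.
  intros Hab Hc Hdini.
  rewrite <- (Ropp_involutive a), <- (Ropp_involutive b).
  apply (le_of_left_dini (fun x => D (- x))); [lra|now apply continuous_on_reflect|].
  intros t Ht eps Heps. destruct (Hdini (- t) ltac:(lra) eps Heps) as [d [Hd Hdt]].
  exists d. split; [exact Hd|]. intros u Hu Htu.
  specialize (Hdt (- u) ltac:(lra) ltac:(lra)). lra.
Qed.

Lemma cont_on_IxR_plus (I : R -> Prop) (f g : R -> R -> R) : cont_on_IxR I f -> cont_on_IxR I g ->
  cont_on_IxR I (fun t r => f t r + g t r).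
Proof.
  intros Hf Hg t r It.
  eapply filterlim_comp_2; [apply Hf, It|apply Hg, It|apply (filterlim_plus (f t r) (g t r))].
Qed.

Lemma cont_on_IxR_mult (I : R -> Prop) (f g : R -> R -> R) : cont_on_IxR I f -> cont_on_IxR I g ->
  cont_on_IxR I (fun t r => f t r * g t r).
Proof.
  intros Hf Hg t r It.
  eapply filterlim_comp_2; [apply Hf, It|apply Hg, It|apply (filterlim_mult (f t r) (g t r))].
Qed.

Lemma cont_on_IxR_comp (I : R -> Prop) (f : R -> R -> R) (c : R -> R) : cont_on_IxR I f ->
  (forall t r, I t -> continuous c (f t r)) -> cont_on_IxR I (fun t r => c (f t r)).
Proof.
  intros Hf Hc t r It. eapply filterlim_comp; [apply Hf, It|apply Hc, It].
Qed.

Lemma cont_on_IxR_opp (I : R -> Prop) (f : R -> R -> R) :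
  cont_on_IxR I f -> cont_on_IxR I (fun t r => - f t r).
Proof.
  intro Hf. apply (cont_on_IxR_comp I f Ropp Hf). intros t r _. apply (filterlim_opp (f t r)).
Qed.

Lemma cont_on_IxR_time (I : R -> Prop) (c : R -> R) : (forall t, I t -> continuous c t) ->
  cont_on_IxR I (fun t _ => c t).
Proof.
  intros Hc t r It.
  apply (filterlim_comp _ _ _ fst c _ (locally t)); [|now apply Hc].
  intros P [d Hd]. exists d. intros [t' r'] [Ht' _] _. now apply Hd.
Qed.

Lemma continuous_slice (I : R -> Prop) (g : R -> R -> R) (t r : R) :
  cont_on_IxR I g -> I t -> continuous (g t) r.
Proof.
  intros Hc It.
  apply (filterlim_comp _ _ _ (fun r' => (t, r')) (fun p => g (fst p) (snd p)) _
    (within (fun p : R * R => I (fst p)) (locally (t, r)))); [|now apply Hc].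
  intros P [d Hd]. exists d. intros r' Hr'. apply Hd; [|exact It].
  split; [apply ball_center|exact Hr'].
Qed.

Lemma cont_on_IxR_uniform (I : R -> Prop) (g : R -> R -> R) : cont_on_IxR I g -> periodic_r I g ->
  forall t0, I t0 -> forall e, 0 < e -> exists d, 0 < d /\
  forall t, I t -> Rabs (t - t0) < d -> forall r, Rabs (g t r - g t0 r) < e.
Proof.
  intros Hc Hp t0 It0 e He.
  assert (Hloc : forall r0, exists d : posreal, forall t r, I t ->
    Rabs (t - t0) < d -> Rabs (r - r0) < d -> Rabs (g t r - g t0 r0) < e / 2).
  { intro r0.
    destruct (proj1 (filterlim_locally _ _) (Hc t0 r0 It0) (mkposreal (e / 2) ltac:(simpl; lra)))
      as [d Hd].
    exists d. intros t r It Ht Hr. now apply (Hd (t, r)). }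
  (* Lebesgue-number argument on the period [0, 1]. *)
  destruct (compactness_value_1d 0 1
    (fun r0 => proj1_sig (constructive_indefinite_description _ (Hloc r0)))) as [d Hd].
  exists d. split; [apply cond_pos|]. intros t It Ht r.
  destruct (frac_shift r) as [n Hn].
  rewrite <- (periodic1_shift_Z (g t) (fun r => Hp t r It) n r),
    <- (periodic1_shift_Z (g t0) (fun r => Hp t0 r It0) n r).
  apply NNPP. intro Hne. apply (Hd _ Hn). intros [r0 [_ [Hr0 Hdr0]]]. apply Hne.
  destruct (constructive_indefinite_description _ (Hloc r0)) as [d0 Hd0]. simpl in *.
  assert (H1 := Hd0 t _ It ltac:(lra) Hr0).
  assert (H2 := Hd0 t0 _ It0 ltac:(rewrite Rminus_diag, Rabs_R0; apply cond_pos) Hr0).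
  apply Rabs_def2 in H1. apply Rabs_def2 in H2. apply Rabs_def1; lra.
Qed.

Lemma supR_attained (I : R -> Prop) (g : R -> R -> R) (t : R) :
  cont_on_IxR I g -> periodic_r I g -> I t ->
  exists rs, supR (g t) = g t rs /\ forall r, g t r <= g t rs.
Proof.
  intros Hc Hp It.
  destruct (periodic1_max (g t) (fun r => Hp t r It) (fun r => continuous_slice I g t r Hc It))
    as [rs Hrs].
  exists rs. split; [apply supR_max|]; exact Hrs.
Qed.

Lemma le_supR (I : R -> Prop) (g : R -> R -> R) (t r : R) :
  cont_on_IxR I g -> periodic_r I g -> I t -> g t r <= supR (g t).
Proof.
  intros Hc Hp It. destruct (supR_attained I g t Hc Hp It) as [rs [-> Hrs]]. apply Hrs.
Qed.

Lemma continuous_on_supR (I : R -> Prop) (g : R -> R -> R) : cont_on_IxR I g -> periodic_r I g ->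
  continuous_on I (fun t => supR (g t)).
Proof.
  intros Hc Hp t0 It0. apply filterlim_locally. intro eps.
  destruct (cont_on_IxR_uniform I g Hc Hp t0 It0 eps (cond_pos eps)) as [d [Hd Hu]].
  exists (mkposreal d Hd). intros t Ht It.
  destruct (supR_attained I g t Hc Hp It) as [r1 [-> H1]].
  destruct (supR_attained I g t0 Hc Hp It0) as [r0 [-> H0]].
  change (Rabs (g t r1 - g t0 r0) < eps).
  assert (A1 := Hu t It Ht r1). assert (A0 := Hu t It Ht r0).
  specialize (H1 r0). specialize (H0 r1).
  apply Rabs_def2 in A1. apply Rabs_def2 in A0. apply Rabs_def1; lra.
Qed.

(** * Maximum principle at spatial critical points *)

Record crit_bounded (I : R -> Prop) (W Wt Wr : R -> R -> R) (h : R -> R) : Prop := {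
  crit_cont : cont_on_IxR I W;
  crit_periodic : periodic_r I W;
  crit_dt : forall t r, I t -> deriv_within I (fun s => W s r) t (Wt t r);
  crit_dr : forall t r, I t -> is_derive (W t) r (Wr t r);
  crit_rate : forall t r, I t -> Wr t r = 0 -> Rabs (Wt t r) <= h t }.

Arguments crit_cont {I W Wt Wr h}.
Arguments crit_periodic {I W Wt Wr h}.

Lemma crit_bounded_opp (I : R -> Prop) (W Wt Wr : R -> R -> R) (h : R -> R) :
  crit_bounded I W Wt Wr h ->
  crit_bounded I (fun t r => - W t r) (fun t r => - Wt t r) (fun t r => - Wr t r) h.
Proof.
  intros [Hc Hp Hdt Hdr Hrate]. split.
  - now apply cont_on_IxR_opp.
  - intros t r It. now rewrite Hp.
  - intros t r It. exact (deriv_within_opp I (fun s => W s r) t _ (Hdt t r It)).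
  - intros t r It. exact (is_derive_opp (W t) r (Wr t r) (Hdr t r It)).
  - intros t r It Hz. rewrite Rabs_Ropp. apply Hrate; [exact It|lra].
Qed.

Section MaxPrinciple.

Variables (I : R -> Prop) (W Wt Wr : R -> R -> R) (h : R -> R).
Hypotheses (HI : is_interval I) (HW : crit_bounded I W Wt Wr h) (Hh : continuous_on I h).

Lemma supR_at_crit (t : R) : I t ->
  exists rs, supR (W t) = W t rs /\ Rabs (Wt t rs) <= h t.
Proof.
  intro It. destruct HW as [Hc Hp _ Hdr Hrate].
  destruct (supR_attained I W t Hc Hp It) as [rs [Hsup Hmax]].
  exists rs. split; [exact Hsup|].
  apply Hrate; [exact It|]. exact (is_derive_max_0 (W t) rs _ Hmax (Hdr t rs It)).
Qed.

Lemma crit_bound_nonneg (t : R) : I t -> 0 <= h t.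
Proof.
  intro It. destruct (supR_at_crit t It) as [rs [_ Hrs]].
  eapply Rle_trans; [apply Rabs_pos|exact Hrs].
Qed.

(* If rs maximises W(t,.), then s |-> W(s,rs) touches sup W(s,.) from below at s = t, and its
   t-derivative there is at most h t: this yields the one-sided Dini bounds. *)
Lemma supR_sub_le_RInt (a b : R) : I a -> I b -> a <= b -> supR (W b) - supR (W a) <= RInt h a b.
Proof.
  intros Ia Ib Hab.
  assert (Isub : forall t, a <= t <= b -> I t) by (intros t Ht; apply (HI a t b); tauto).
  assert (HF : forall t, I t -> deriv_within I (fun s => RInt h a s) t (h t))
    by (intros; now apply deriv_within_RInt).
  enough (Hmono : supR (W b) - RInt h a b <= supR (W a) - RInt h a a)
    by (rewrite RInt_point in Hmono; unfold zero in Hmono; simpl in Hmono; lra).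
  apply (le_of_left_dini (fun s => supR (W s) - RInt h a s)); [exact Hab| |].
  - apply (continuous_on_subset I); [exact Isub|].
    apply continuous_on_plus; [apply continuous_on_supR; apply HW|].
    apply continuous_on_opp. intros t It. exact (deriv_within_continuous _ _ _ _ (HF t It)).
  - intros t Ht eps Heps.
    destruct (supR_at_crit t (Isub t ltac:(lra))) as [rs [Hsup Hrate]].
    assert (Hd : deriv_within I (fun s => W s rs + - RInt h a s) t (Wt t rs + - h t))
      by (apply deriv_within_plus; [apply HW|apply deriv_within_opp, HF]; apply Isub; lra).
    destruct (deriv_within_left_bound _ _ _ _ Hd eps Heps) as [d [Hd0 Hdb]].
    exists d. split; [exact Hd0|]. intros u Hu Htu.
    specialize (Hdb u (Isub u ltac:(lra)) ltac:(lra) Htu).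
    assert (Hle := le_supR I W u rs (crit_cont HW) (crit_periodic HW) (Isub u ltac:(lra))).
    apply Rabs_le_between in Hrate. rewrite Hsup. nra.
Qed.

Lemma supR_sub_ge_RInt (a b : R) : I a -> I b -> a <= b -> supR (W a) - supR (W b) <= RInt h a b.
Proof.
  intros Ia Ib Hab.
  assert (Isub : forall t, a <= t <= b -> I t) by (intros t Ht; apply (HI a t b); tauto).
  assert (HF : forall t, I t -> deriv_within I (fun s => RInt h a s) t (h t))
    by (intros; now apply deriv_within_RInt).
  enough (Hmono : supR (W a) + RInt h a a <= supR (W b) + RInt h a b)
    by (rewrite RInt_point in Hmono; unfold zero in Hmono; simpl in Hmono; lra).
  apply (le_of_right_dini (fun s => supR (W s) + RInt h a s)); [exact Hab| |].
  - apply (continuous_on_subset I); [exact Isub|].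
    apply continuous_on_plus; [apply continuous_on_supR; apply HW|].
    intros t It. exact (deriv_within_continuous _ _ _ _ (HF t It)).
  - intros t Ht eps Heps.
    destruct (supR_at_crit t (Isub t ltac:(lra))) as [rs [Hsup Hrate]].
    assert (Hd : deriv_within I (fun s => W s rs + RInt h a s) t (Wt t rs + h t))
      by (apply deriv_within_plus; [apply HW|apply HF]; apply Isub; lra).
    destruct (deriv_within_right_bound _ _ _ _ Hd eps Heps) as [d [Hd0 Hdb]].
    exists d. split; [exact Hd0|]. intros u Hu Htu.
    specialize (Hdb u (Isub u ltac:(lra)) ltac:(lra) Htu).
    assert (Hle := le_supR I W u rs (crit_cont HW) (crit_periodic HW) (Isub u ltac:(lra))).
    apply Rabs_le_between in Hrate. rewrite Hsup. nra.
Qed.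

Lemma RInt_crit_bound_nonneg (a b : R) : I a -> I b -> 0 <= RInt h (Rmin a b) (Rmax a b).
Proof.
  intros Ia Ib.
  assert (Imin : I (Rmin a b)) by (unfold Rmin; destruct Rle_dec; assumption).
  assert (Imax : I (Rmax a b)) by (unfold Rmax; destruct Rle_dec; assumption).
  apply RInt_ge_0; [apply Rmin_Rmax|now apply (ex_RInt_continuous_on I)|].
  intros x Hx. apply crit_bound_nonneg, (HI (Rmin a b) x (Rmax a b)); auto; lra.
Qed.

End MaxPrinciple.

Lemma le_of_crit_bounded (I : R -> Prop) (W Wt Wr : R -> R -> R) (h : R -> R) (A s0 t : R) :
  is_interval I -> crit_bounded I W Wt Wr h -> continuous_on I h -> I s0 -> I t ->
  (forall r, W s0 r <= A) -> forall r, W t r <= A + RInt h (Rmin s0 t) (Rmax s0 t).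
Proof.
  intros HI HW Hh Is0 It HA r.
  assert (Hs0 : supR (W s0) <= A).
  { destruct (supR_attained I W s0 (crit_cont HW) (crit_periodic HW) Is0) as [rs [-> _]].
    apply HA. }
  assert (Ht := le_supR I W t r (crit_cont HW) (crit_periodic HW) It).
  destruct (Rle_or_lt s0 t).
  - rewrite Rmin_left, Rmax_right by lra.
    pose proof (supR_sub_le_RInt I W Wt Wr h HI HW Hh s0 t Is0 It ltac:(lra)). lra.
  - rewrite Rmin_right, Rmax_left by lra.
    pose proof (supR_sub_ge_RInt I W Wt Wr h HI HW Hh t s0 It Is0 ltac:(lra)). lra.
Qed.

Lemma abs_le_of_crit_bounded (I : R -> Prop) (W Wt Wr : R -> R -> R) (h : R -> R)
  (A s0 t : R) :
  is_interval I -> crit_bounded I W Wt Wr h -> continuous_on I h -> I s0 -> I t ->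
  (forall r, Rabs (W s0 r) <= A) -> forall r, Rabs (W t r) <= A + RInt h (Rmin s0 t) (Rmax s0 t).
Proof.
  intros HI HW Hh Is0 It HA r.
  assert (HA' : forall r, - A <= W s0 r <= A) by (intro r'; apply Rabs_le_between, HA).
  assert (Hup : forall r, W s0 r <= A) by (intro r'; apply HA').
  assert (Hlow : forall r, - W s0 r <= A) by (intro r'; specialize (HA' r'); lra).
  assert (Hle := le_of_crit_bounded I W Wt Wr h A s0 t HI HW Hh Is0 It Hup r).
  assert (Hge := le_of_crit_bounded I _ _ _ h A s0 t HI (crit_bounded_opp I W Wt Wr h HW) Hh Is0 It
    Hlow r).
  apply Rabs_le_between. lra.
Qed.

Lemma Rabs_le_sqrt_sum_sq (x y : R) : Rabs x <= sqrt (x ^ 2 + y ^ 2).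
Proof.
  rewrite <- sqrt_Rsqr_abs. apply sqrt_le_1_alt. unfold Rsqr. nra.
Qed.

Lemma sqrt_sum_sq_le_abs (x y : R) : sqrt (x ^ 2 + y ^ 2) <= Rabs x + Rabs y.
Proof.
  pose proof (Rabs_pos x); pose proof (Rabs_pos y).
  rewrite <- (sqrt_Rsqr (Rabs x + Rabs y)) by lra.
  apply sqrt_le_1_alt. rewrite <- (pow2_abs x), <- (pow2_abs y). unfold Rsqr. nra.
Qed.

Lemma crit_rate_bound (E P a b x y xt t : R) : 0 < E -> 0 < P -> 0 < t ->
  E * xt = ((- a - 1 / t) * E - b * (P * E)) * x + (- E / t) * y ->
  Rabs xt <= (Rabs a + 2 / t + Rabs b * P) * sqrt (x ^ 2 + y ^ 2).
Proof.
  intros HE HP Ht Heq.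
  assert (Hxt : xt = (- a - 1 / t - b * P) * x - (1 / t) * y).
  { apply (Rmult_eq_reg_l E); [|lra]. rewrite Heq. field. lra. }
  assert (Hx := Rabs_le_sqrt_sum_sq x y).
  assert (Hy := Rabs_le_sqrt_sum_sq y x). rewrite Rplus_comm in Hy.
  assert (Hcoef : Rabs (- a - 1 / t - b * P) <= Rabs a + 1 / t + Rabs b * P).
  { assert (Habs := Rabs_triang (- a) (- (1 / t) + - (b * P))).
    assert (Habs' := Rabs_triang (- (1 / t)) (- (b * P))).
    rewrite !Rabs_Ropp, Rabs_mult, (Rabs_right P), (Rabs_right (1 / t)) in *
      by (apply Rle_ge, Rlt_le; try apply Rdiv_lt_0_compat; lra).
    replace (- a - 1 / t - b * P) with (- a + (- (1 / t) + - (b * P))) by ring. lra. }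
  rewrite Hxt. eapply Rle_trans; [apply Rabs_triang|].
  rewrite Rabs_Ropp, !Rabs_mult, (Rabs_right (1 / t))
    by (apply Rle_ge, Rlt_le, Rdiv_lt_0_compat; lra).
  pose proof (Rabs_pos x); pose proof (Rabs_pos y); pose proof (Rabs_pos (- a - 1 / t - b * P)).
  assert (0 < 1 / t) by (apply Rdiv_lt_0_compat; lra).
  assert (2 / t = 1 / t + 1 / t) by (field; lra).
  nra.
Qed.

Lemma exp_neg_split (a b : R) : exp (- a) = exp (b - a) * exp (- b).
Proof. rewrite <- exp_plus. f_equal. ring. Qed.

Definition amplitude (X Y : R -> R -> R) (t r : R) : R := sqrt (X t r ^ 2 + Y t r ^ 2).

Definition coef_bound (lamt mut mu lam : R -> R -> R) (t r : R) : R :=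
  Rabs (lamt t r) + 2 / t + Rabs (mut t r) * exp (mu t r - lam t r).

Definition data_bound (psi dphi : R -> R) (mu lam : R -> R -> R) (r : R) : R :=
  Rabs (psi r) * exp (- mu 1 r) + Rabs (dphi r) * exp (- lam 1 r).

Definition growth (lamt mut mu lam X Y : R -> R -> R) (t : R) : R :=
  supR (coef_bound lamt mut mu lam t) * supR (amplitude X Y t).

Section Proposition.

Variables (I : R -> Prop) (lam lamt lamr mu mut : R -> R -> R) (psi dphi : R -> R)
  (X Xt Xr Y Yt Yr : R -> R -> R).

Hypotheses (HI : is_interval I) (I1 : I 1) (Ipos : forall t, I t -> 0 < t)
  (lam_C1 : C1_with I lam lamt lamr) (mu_c : cont_on_IxR I mu) (mut_c : cont_on_IxR I mut)
  (Plam : periodic_r I lam) (Pmu : periodic_r I mu) (Pmut : periodic_r I mut)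
  (psi_c : forall r, continuous psi r) (dphi_c : forall r, continuous dphi r)
  (Ppsi : periodic1 psi) (Pdphi : periodic1 dphi)
  (X_C1 : C1_with I X Xt Xr) (Y_C1 : C1_with I Y Yt Yr)
  (PX : periodic_r I X) (PY : periodic_r I Y)
  (PDEX : forall t r, I t ->
     exp (- mu t r) * Xt t r + exp (- lam t r) * Xr t r =
     ((- lamt t r - 1 / t) * exp (- mu t r) - mut t r * exp (- lam t r)) * X t r
     + (- exp (- mu t r) / t) * Y t r)
  (PDEY : forall t r, I t ->
     exp (- mu t r) * Yt t r - exp (- lam t r) * Yr t r =
     (- exp (- mu t r) / t) * X t r
     + ((- lamt t r - 1 / t) * exp (- mu t r) + mut t r * exp (- lam t r)) * Y t r)
  (X1 : forall r, X 1 r = exp (- mu 1 r) * psi r - exp (- lam 1 r) * dphi r)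
  (Y1 : forall r, Y 1 r = exp (- mu 1 r) * psi r + exp (- lam 1 r) * dphi r).

Lemma initial_bound (r : R) :
  Rabs (X 1 r) <= supR (data_bound psi dphi mu lam) /\
  Rabs (Y 1 r) <= supR (data_bound psi dphi mu lam).
Proof.
  destruct lam_C1 as [_ [_ [lam_c _]]].
  assert (Hcont : forall r, continuous (data_bound psi dphi mu lam) r).
  { intro r'. unfold data_bound.
    assert (Hexp : forall g : R -> R, continuous g r' -> continuous (fun x => exp (- g x)) r').
    { intros g Hg. apply (continuous_comp (fun x => - g x) exp); [now apply (continuous_opp g)|].
      apply (@ex_derive_continuous R_AbsRing R_NormedModule). auto_derive. easy. }
    assert (Habs : forall g : R -> R, continuous g r' -> continuous (fun x => Rabs (g x)) r')
      by (intros g Hg; apply (continuous_comp g Rabs); [exact Hg|apply continuous_Rabs]).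
    apply (continuous_plus (fun x => Rabs (psi x) * exp (- mu 1 x)));
      apply (continuous_mult (fun x => Rabs _)); try (apply Habs; apply psi_c || apply dphi_c);
      apply Hexp; now apply (continuous_slice I). }
  assert (Hper : periodic1 (data_bound psi dphi mu lam)).
  { intro r'. unfold data_bound. now rewrite Ppsi, Pdphi, (Pmu 1 r' I1), (Plam 1 r' I1). }
  destruct (periodic1_max _ Hper Hcont) as [rs Hrs].
  rewrite (supR_max _ rs Hrs). specialize (Hrs r). unfold data_bound in *.
  assert (Hpsi : Rabs (exp (- mu 1 r) * psi r) = Rabs (psi r) * exp (- mu 1 r))
    by (rewrite Rabs_mult, Rabs_right, Rmult_comm; [easy|left; apply exp_pos]).
  assert (Hdphi : Rabs (exp (- lam 1 r) * dphi r) = Rabs (dphi r) * exp (- lam 1 r))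
    by (rewrite Rabs_mult, Rabs_right, Rmult_comm; [easy|left; apply exp_pos]).
  rewrite X1, Y1. split.
  - pose proof (Rabs_triang (exp (- mu 1 r) * psi r) (- (exp (- lam 1 r) * dphi r))).
    rewrite Rabs_Ropp in *. unfold Rminus. lra.
  - pose proof (Rabs_triang (exp (- mu 1 r) * psi r) (exp (- lam 1 r) * dphi r)). lra.
Qed.

Lemma amplitude_cont : cont_on_IxR I (amplitude X Y).
Proof.
  destruct X_C1 as [_ [_ [X_c _]]]. destruct Y_C1 as [_ [_ [Y_c _]]].
  assert (Hsq : forall x, continuous (fun y => y ^ 2) x)
    by (intro x; apply (@ex_derive_continuous R_AbsRing R_NormedModule); auto_derive; easy).
  apply (cont_on_IxR_comp I (fun t r => X t r ^ 2 + Y t r ^ 2) sqrt).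
  - apply cont_on_IxR_plus; apply (cont_on_IxR_comp I _ (fun y => y ^ 2)); auto.
  - intros t r _. apply continuity_pt_filterlim, continuity_pt_sqrt. nra.
Qed.

Lemma amplitude_periodic : periodic_r I (amplitude X Y).
Proof. intros t r It. unfold amplitude. now rewrite PX, PY. Qed.

Lemma coef_bound_cont : cont_on_IxR I (coef_bound lamt mut mu lam).
Proof.
  destruct lam_C1 as [_ [_ [lam_c [lamt_c _]]]].
  assert (Habs : forall f, cont_on_IxR I f -> cont_on_IxR I (fun t r => Rabs (f t r)))
    by (intros f Hf; apply (cont_on_IxR_comp I f Rabs Hf); intros; apply continuous_Rabs).
  apply cont_on_IxR_plus; [apply cont_on_IxR_plus|apply cont_on_IxR_mult].
  - now apply Habs.
  - apply (cont_on_IxR_time I (fun t => 2 / t)). intros t It.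
    apply (@ex_derive_continuous R_AbsRing R_NormedModule). auto_derive.
    specialize (Ipos t It). lra.
  - now apply Habs.
  - apply (cont_on_IxR_comp I (fun t r => mu t r - lam t r) exp).
    + apply cont_on_IxR_plus; [exact mu_c|now apply cont_on_IxR_opp].
    + intros t r _. apply (@ex_derive_continuous R_AbsRing R_NormedModule). auto_derive. easy.
Qed.

Lemma coef_bound_nonneg (t r : R) : I t -> 0 <= coef_bound lamt mut mu lam t r.
Proof.
  intro It. unfold coef_bound. specialize (Ipos t It).
  assert (0 < 2 / t) by (apply Rdiv_lt_0_compat; lra).
  pose proof (Rabs_pos (lamt t r)); pose proof (Rabs_pos (mut t r)).
  pose proof (exp_pos (mu t r - lam t r)). nra.
Qed.

(* On a one-point interval [deriv_within] holds for every value, so [lamt], and with it [m],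
   is unconstrained; two points of [I] make [lamt] unique and hence periodic. *)
Section Nondegenerate.

Variables (p q : R).
Hypotheses (Ip : I p) (Iq : I q) (Hpq : p <> q).

Lemma coef_bound_periodic : periodic_r I (coef_bound lamt mut mu lam).
Proof.
  destruct lam_C1 as [lam_t _].
  assert (Plamt := deriv_within_periodic I lam lamt p q HI Ip Iq Hpq Plam lam_t).
  intros t r It. unfold coef_bound. now rewrite Plamt, Pmut, Pmu, Plam.
Qed.

Lemma growth_cont : continuous_on I (growth lamt mut mu lam X Y).
Proof.
  apply continuous_on_mult; apply continuous_on_supR.
  - exact coef_bound_cont.
  - exact coef_bound_periodic.
  - exact amplitude_cont.
  - exact amplitude_periodic.
Qed.

Lemma coef_amplitude_le_growth (t r : R) : I t ->
  coef_bound lamt mut mu lam t r * amplitude X Y t r <= growth lamt mut mu lam X Y t.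
Proof.
  intro It. apply Rmult_le_compat; [now apply coef_bound_nonneg|apply sqrt_pos| |].
  - apply (le_supR I); [exact coef_bound_cont|exact coef_bound_periodic|exact It].
  - apply (le_supR I); [exact amplitude_cont|exact amplitude_periodic|exact It].
Qed.

Lemma X_crit_bounded : crit_bounded I X Xt Xr (growth lamt mut mu lam X Y).
Proof.
  destruct X_C1 as [X_t [X_r [X_c _]]]. split; try assumption.
  intros t r It Hcrit. eapply Rle_trans; [|apply (coef_amplitude_le_growth t r It)].
  apply (crit_rate_bound (exp (- mu t r))); [apply exp_pos|apply exp_pos|now apply Ipos|].
  rewrite <- exp_neg_split. specialize (PDEX t r It).
  rewrite Hcrit, Rmult_0_r, Rplus_0_r in PDEX. exact PDEX.
Qed.

Lemma Y_crit_bounded : crit_bounded I Y Yt Yr (growth lamt mut mu lam X Y).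
Proof.
  destruct Y_C1 as [Y_t [Y_r [Y_c _]]]. split; try assumption.
  intros t r It Hcrit. eapply Rle_trans; [|apply (coef_amplitude_le_growth t r It)].
  unfold coef_bound, amplitude. rewrite <- (Rabs_Ropp (mut t r)), (Rplus_comm (X t r ^ 2)).
  apply (crit_rate_bound (exp (- mu t r))); [apply exp_pos|apply exp_pos|now apply Ipos|].
  specialize (PDEY t r It). rewrite Hcrit, Rmult_0_r, Rminus_0_r in PDEY.
  rewrite PDEY, (exp_neg_split (lam t r) (mu t r)). ring.
Qed.

End Nondegenerate.

Lemma supR_amplitude_bound (t : R) : I t ->
  supR (amplitude X Y t) <= 2 * supR (data_bound psi dphi mu lam)
    + 2 * RInt (growth lamt mut mu lam X Y) (Rmin 1 t) (Rmax 1 t) /\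
  0 <= RInt (growth lamt mut mu lam X Y) (Rmin 1 t) (Rmax 1 t).
Proof.
  intro It.
  destruct (supR_attained I (amplitude X Y) t amplitude_cont amplitude_periodic It) as [rs [-> _]].
  assert (Hsum := sqrt_sum_sq_le_abs (X t rs) (Y t rs)). fold (amplitude X Y t rs) in Hsum.
  destruct (Req_dec t 1) as [->|Ht1].
  { rewrite Rmin_left, Rmax_left, RInt_point by lra. unfold zero; simpl.
    destruct (initial_bound rs). lra. }
  assert (HX := abs_le_of_crit_bounded I X Xt Xr _ _ 1 t HI (X_crit_bounded t 1 It I1 Ht1)
    (growth_cont t 1 It I1 Ht1) I1 It (fun r => proj1 (initial_bound r)) rs).
  assert (HY := abs_le_of_crit_bounded I Y Yt Yr _ _ 1 t HI (Y_crit_bounded t 1 It I1 Ht1)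
    (growth_cont t 1 It I1 Ht1) I1 It (fun r => proj2 (initial_bound r)) rs).
  assert (Hpos := RInt_crit_bound_nonneg I X Xt Xr _ HI (X_crit_bounded t 1 It I1 Ht1)
    (growth_cont t 1 It I1 Ht1) 1 t I1 It).
  split; lra.
Qed.

End Proposition.

Theorem proposition2p3
  (I : R -> Prop)
  (lam lamt lamr mu mut : R -> R -> R)
  (psi phi dphi : R -> R)
  (X Xt Xr Y Yt Yr : R -> R -> R) :
  is_interval I -> I 1 -> (forall t, I t -> 0 < t) ->
  (* lambda, mu, mu~ in C^1(I x R), 1-periodic in r *)
  C1_with I lam lamt lamr -> C1_on I mu -> C1_on I mut ->
  periodic_r I lam -> periodic_r I mu -> periodic_r I mut ->
  (* psi in C^1(R), phi in C^2(R) with phi' = dphi, both 1-periodic *)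
  (exists dpsi, (forall r, is_derive psi r (dpsi r)) /\ (forall r, continuous dpsi r)) ->
  (forall r, is_derive phi r (dphi r)) ->
  (exists d2phi, (forall r, is_derive dphi r (d2phi r)) /\ (forall r, continuous d2phi r)) ->
  periodic1 psi -> periodic1 phi ->
  (* X, Y in C^1(I x R), 1-periodic in r *)
  C1_with I X Xt Xr -> C1_with I Y Yt Yr ->
  periodic_r I X -> periodic_r I Y ->
  (* D^+ X = a~ X + b Y,  D^- Y = b X + c~ Y *)
  (forall t r, I t ->
     exp (- mu t r) * Xt t r + exp (- lam t r) * Xr t r =
     ((- lamt t r - 1 / t) * exp (- mu t r) - mut t r * exp (- lam t r)) * X t r
     + (- exp (- mu t r) / t) * Y t r) ->
  (forall t r, I t ->
     exp (- mu t r) * Yt t r - exp (- lam t r) * Yr t r =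
     (- exp (- mu t r) / t) * X t r
     + ((- lamt t r - 1 / t) * exp (- mu t r) + mut t r * exp (- lam t r)) * Y t r) ->
  (* initial data at t = 1 *)
  (forall r, X 1 r = exp (- mu 1 r) * psi r - exp (- lam 1 r) * dphi r) ->
  (forall r, Y 1 r = exp (- mu 1 r) * psi r + exp (- lam 1 r) * dphi r) ->
  let K0 := 2 * supR (fun r => Rabs (psi r) * exp (- mu 1 r)
                               + Rabs (dphi r) * exp (- lam 1 r)) in
  let m := fun t => supR (fun r => Rabs (lamt t r) + 2 / t
                               + Rabs (mut t r) * exp (mu t r - lam t r)) in
  let K := fun t => supR (fun r => sqrt (X t r ^ 2 + Y t r ^ 2)) in
  (forall t, I t -> t <= 1 -> K t <= K0 + 3 * RInt (fun s => m s * K s) t 1) /\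
  (forall t, I t -> 1 <= t -> K t <= K0 + 3 * RInt (fun s => m s * K s) 1 t).
Proof.
  intros HI I1 Ipos lam_C1 [mu_t [mu_r [_ [_ [mu_c _]]]]] [mut_t [mut_r [_ [_ [mut_c _]]]]]
    Plam Pmu Pmut [dpsi [psi_d _]] phi_d [d2phi [dphi_d _]] Ppsi Pphi X_C1 Y_C1 PX PY PDEX PDEY
    X1 Y1 K0 m K.
  assert (Hbound := supR_amplitude_bound I lam lamt lamr mu mut psi dphi X Xt Xr Y Yt Yr
    HI I1 Ipos lam_C1 mu_c mut_c Plam Pmu Pmut (continuous_of_is_derive psi dpsi psi_d)
    (continuous_of_is_derive dphi d2phi dphi_d) Ppsi (periodic1_derive phi dphi phi_d Pphi)
    X_C1 Y_C1 PX PY PDEX PDEY X1 Y1).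
  split; intros t It Ht; destruct (Hbound t It) as [HK Hpos].
  - rewrite Rmin_right, Rmax_left in HK, Hpos by exact Ht.
    change (supR (amplitude X Y t) <= 2 * supR (data_bound psi dphi mu lam)
      + 3 * RInt (growth lamt mut mu lam X Y) t 1). lra.
  - rewrite Rmin_left, Rmax_right in HK, Hpos by exact Ht.
    change (supR (amplitude X Y t) <= 2 * supR (data_bound psi dphi mu lam)
      + 3 * RInt (growth lamt mut mu lam X Y) 1 t). lra.
Qed.
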